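(* Let $A$ and $B$ be square $\mathbb{N}$-matrices. Then $A$ and $B$ are unitally shift equivalent if and only if their unital dimension data $(G_A,G_A^+,\theta_A,u_A)$ and $(G_B,G_B^+,\theta_B,u_B)$ are isomorphic, i.e. there is a group isomorphism $\Theta\colon G_A\to G_B$ with $\Theta(G_A^+)=G_B^+$, $\Theta\circ\theta_A=\theta_B\circ\Theta$ and $\Theta(u_A)=u_B$.
   Context: $\mathbb{N}=\{0,1,2,\dots\}$. For a square $\mathbb{N}$-matrix $A$ of size $|A|$, the dimension group is $G_A=(\mathbb{Z}^{|A|}\times\mathbb{N})/\sim$, where $(v,k)\sim(v',k')$ iff there is $l\in\mathbb{N}$ (with $l\ge k,k'$) such that $(A^t)^{l-k}v=(A^t)^{l-k'}v'$; write $[v,k]$ for classes. It is the inductive limit of $\mathbb{Z}^{|A|}\xrightarrow{A^t}\mathbb{Z}^{|A|}\xrightarrow{A^t}\cdots$. The positive cone is $G_A^+=\{[v,k]: v\in\mathbb{N}^{|A|}\}$, $\theta_A$ is the automorphism induced by multiplication by $A^t$, and $u_A=[\underline1,0]$ where $\underline1$ is the all-ones column vector. Two square $\mathbb{N}$-matrices $A,B$ are shift equivalent if there are an integer $\ell\ge1$ and rectangular $\mathbb{N}$-matrices $R,S$ with $A^\ell=RS$, $B^\ell=SR$, $AR=RB$, $BS=SA$. Such a shift equivalence $(R,S)$ is unital if there are $m,k\in\mathbb{N}$ with $(B^t)^mR^t\underline{1}=(B^t)^{m+k}\underline{1}$ (equivalently, the induced map $\hat R\colon G_A\to G_B$, $\hat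 R[v,k]=[R^tv,k]$, satisfies $\hat R(u_A)=\theta_B^k(u_B)$ for some $k\in\mathbb{N}$). $A$ and $B$ are unitally shift equivalent if a unital shift equivalence from $A$ to $B$ exists. *)

From mathcomp Require Import all_boot all_order all_algebra.
Set Implicit Arguments. Unset Strict Implicit. Unset Printing Implicit Defensive.
Import GRing.Theory Num.Theory.
Local Open Scope ring_scope.

Definition shift_equiv_by (n m : nat) (A : 'M[nat]_n) (B : 'M[nat]_m)
  (l : nat) (R : 'M[nat]_(n, m)) (S : 'M[nat]_(m, n)) : Prop :=
  [/\ (0 < l)%N, A ^+ l = R *m S, B ^+ l = S *m R,
      A *m R = R *m B & B *m S = S *m A].

Definition unital_se (n m : nat) (B : 'M[nat]_m) (R : 'M[nat]_(n, m)) : Prop :=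
  exists p k : nat,
    (B^T) ^+ p *m (R^T *m const_mx 1 : 'cV[nat]_m)
    = (B^T) ^+ (p + k) *m (const_mx 1 : 'cV[nat]_m).

Definition unitally_shift_equivalent (n m : nat) (A : 'M[nat]_n) (B : 'M[nat]_m)
  : Prop :=
  exists (l : nat) (R : 'M[nat]_(n, m)) (S : 'M[nat]_(m, n)),
    shift_equiv_by A B l R S /\ unital_se B R.

(** Dimension group G_A = (Z^|A| x N)/~, handled through representatives.
    A representative (v, k) stands for the class [v, k]. *)
Definition drep (n : nat) : Type := ('cV[int]_n * nat)%type.

Definition tZ (n : nat) (A : 'M[nat]_n) : 'M[int]_n :=
  (map_mx (fun x : nat => x%:Z) A)^T.

Definition tpow (n : nat) (A : 'M[nat]_n) (j : nat) (v : 'cV[int]_n) : 'cV[int]_n :=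
  (tZ A) ^+ j *m v.

Definition dim_rel (n : nat) (A : 'M[nat]_n) (x y : drep n) : Prop :=
  exists l : nat, [/\ (x.2 <= l)%N, (y.2 <= l)%N &
                     tpow A (l - x.2) x.1 = tpow A (l - y.2) y.1].

Definition dim_add (n : nat) (A : 'M[nat]_n) (x y : drep n) : drep n :=
  (tpow A y.2 x.1 + tpow A x.2 y.1, (x.2 + y.2)%N).

Definition dim_pos (n : nat) (A : 'M[nat]_n) (x : drep n) : Prop :=
  exists y : drep n, dim_rel A x y /\ forall i, 0 <= y.1 i 0.

Definition dim_theta (n : nat) (A : 'M[nat]_n) (x : drep n) : drep n :=
  (tZ A *m x.1, x.2).

Definition dim_unit (n : nat) : drep n := (const_mx 1, 0%N).

(** [Th] (on representatives) induces a group isomorphism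
    Theta : G_A -> G_B with Theta(G_A^+) = G_B^+, Theta o theta_A = theta_B o Theta
    and Theta(u_A) = u_B. *)
Definition dim_data_iso_by (n m : nat) (A : 'M[nat]_n) (B : 'M[nat]_m)
  (Th : drep n -> drep m) : Prop :=
  (forall x y, dim_rel A x y -> dim_rel B (Th x) (Th y)) /\
  (forall x y, dim_rel B (Th (dim_add A x y)) (dim_add B (Th x) (Th y))) /\
  (forall x y, dim_rel B (Th x) (Th y) -> dim_rel A x y) /\
  (forall y, exists x, dim_rel B (Th x) y) /\
  (forall x, dim_pos A x -> dim_pos B (Th x)) /\
  (forall y, dim_pos B y -> exists x, dim_pos A x /\ dim_rel B (Th x) y) /\
  (forall x, dim_rel B (Th (dim_theta A x)) (dim_theta B (Th x))) /\
  dim_rel B (Th (dim_unit n)) (dim_unit m).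

Definition dim_data_isomorphic (n m : nat) (A : 'M[nat]_n) (B : 'M[nat]_m) : Prop :=
  exists Th : drep n -> drep m, dim_data_iso_by A B Th.

(* A unital shift equivalence (R, S) of lag l induces [v, k] |-> [R^t v, k + k0], with k0
   from unitality, on the dimension groups; it is an ordered isomorphism because S^t R^t
   and R^t S^t are the lag-l powers of theta, which are automorphisms.  Conversely, an
   ordered isomorphism sends each basis vector of Z^|A| to a positive class; bringing these
   to a common level K yields an N-matrix R with Theta [v, j] = [R^t v, K + j], and
   Theta^-1 yields S likewise.  The identities A R = R B, B S = S A, R S = A^c and S R = B^c
   then hold only after multiplying by a large power B^N or A^N, and (R B^N, S A^N) is a
   genuine shift equivalence. *)

From Stdlib Require Import IndefiniteDescription.
From mathcomp Require Import all_boot all_order all_algebra.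
From mathcomp Require Import zify.
Set Implicit Arguments. Unset Strict Implicit. Unset Printing Implicit Defensive.
Import GRing.Theory Num.Theory.
Local Open Scope ring_scope.

Lemma trmxX (R : comPzSemiRingType) n (A : 'M[R]_n) k : (A ^+ k)^T = A^T ^+ k.
Proof.
elim: k => [|k IH]; first by rewrite !expr0 trmx1.
by rewrite exprS exprSr -!mulmxE trmx_mul IH.
Qed.

Lemma map_mxX (aR rR : pzSemiRingType) (f : {rmorphism aR -> rR}) n
    (A : 'M[aR]_n) k :
  map_mx f (A ^+ k) = map_mx f A ^+ k.
Proof.
elim: k => [|k IH]; first by rewrite !expr0 map_mx1.
by rewrite !exprS -!mulmxE map_mxM IH.
Qed.

Lemma map_mx_Posz_inj a b : injective (map_mx Posz : 'M[nat]_(a, b) -> 'M[int]_(a, b)).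
Proof.
move=> P Q /matrixP e; apply/matrixP => i j.
by have := e i j; rewrite !mxE => -[].
Qed.

Lemma mulmx_exp_intertwine (R : pzSemiRingType) a b (X : 'M[R]_a) (Y : 'M[R]_b)
    (P : 'M[R]_(a, b)) N :
  X *m P *m Y ^+ N = P *m Y *m Y ^+ N ->
  forall j, X ^+ j *m P *m Y ^+ N = P *m Y ^+ j *m Y ^+ N.
Proof.
have YC i j : Y ^+ i *m Y ^+ j = Y ^+ j *m Y ^+ i by rewrite !mulmxE -!exprD addnC.
move=> e; elim=> [|j IH]; first by rewrite !expr0 mul1mx mulmx1.
rewrite exprS -mulmxE -!mulmxA (mulmxA _ P) IH -!mulmxA YC !mulmxA e.
by rewrite -!mulmxA YC (mulmxA Y) mulmxE -exprS.
Qed.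

Lemma mulmx_exp_up (R : pzSemiRingType) a b (X : 'M[R]_b) (P Q : 'M[R]_(a, b))
    N N' :
  P *m X ^+ N = Q *m X ^+ N -> (N <= N')%N -> P *m X ^+ N' = Q *m X ^+ N'.
Proof.
by move=> e /subnKC <-; rewrite exprD -mulmxE !mulmxA e.
Qed.

Definition tZmx a b (P : 'M[nat]_(a, b)) : 'M[int]_(b, a) := (map_mx Posz P)^T.

Lemma tZE n (A : 'M[nat]_n) : tZ A = tZmx A.
Proof. by []. Qed.

Lemma tZmxM a b c (P : 'M[nat]_(a, b)) (Q : 'M[nat]_(b, c)) :
  tZmx (P *m Q) = tZmx Q *m tZmx P.
Proof. by rewrite /tZmx map_mxM trmx_mul. Qed.

Lemma tZmxX n (A : 'M[nat]_n) k : tZmx (A ^+ k) = tZ A ^+ k.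
Proof. by rewrite /tZmx map_mxX trmxX. Qed.

Lemma tZmx_inj a b : injective (@tZmx a b).
Proof. by move=> P Q /trmx_inj /map_mx_Posz_inj. Qed.

Lemma tZmx_map a b (P : 'M[nat]_(a, b)) (u : 'cV[nat]_a) :
  tZmx P *m map_mx Posz u = map_mx Posz (P^T *m u).
Proof. by rewrite /tZmx map_trmx map_mxM. Qed.

Lemma tpowE n (A : 'M[nat]_n) j v : tpow A j v = tZmx (A ^+ j) *m v.
Proof. by rewrite /tpow tZmxX. Qed.

Lemma tpow_tZmx n m (B : 'M[nat]_m) (P : 'M[nat]_(n, m)) j v :
  tpow B j (tZmx P *m v) = tZmx (P *m B ^+ j) *m v.
Proof. by rewrite tpowE mulmxA tZmxM. Qed.

Lemma tpow_map n (A : 'M[nat]_n) j (u : 'cV[nat]_n) :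
  tpow A j (map_mx Posz u) = map_mx Posz ((A ^+ j)^T *m u).
Proof. by rewrite tpowE tZmx_map. Qed.

Lemma tpow_intertwine n m (A : 'M[nat]_n) (B : 'M[nat]_m) (R : 'M[nat]_(n, m)) :
  A *m R = R *m B -> forall j v, tpow B j (tZmx R *m v) = tZmx R *m tpow A j v.
Proof.
move=> eAR j v; rewrite tpow_tZmx tpowE mulmxA -tZmxM.
by have := @mulmx_exp_intertwine _ _ _ A B R 0 _ j; rewrite !expr0 !mulmx1 => ->.
Qed.

Section DimensionGroup.

Variables (n : nat) (A : 'M[nat]_n).
Implicit Types (x y z : drep n) (v w : 'cV[int]_n).

Lemma tpow0 v : tpow A 0 v = v.
Proof. by rewrite /tpow expr0 mul1mx. Qed.

Lemma tpowD i j v : tpow A (i + j) v = tpow A i (tpow A j v).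
Proof. by rewrite /tpow exprD -mulmxE mulmxA. Qed.

Lemma tpowS j v : tpow A j.+1 v = tZ A *m tpow A j v.
Proof. by rewrite /tpow exprS -mulmxE mulmxA. Qed.

Lemma tpowDr i v w : tpow A i (v + w) = tpow A i v + tpow A i w.
Proof. exact: mulmxDr. Qed.

Lemma tpow_theta i v : tpow A i (tZ A *m v) = tZ A *m tpow A i v.
Proof. by rewrite /tpow !mulmxA !mulmxE -exprSr -exprS. Qed.

Lemma tpow_eq_up i j v w :
  tpow A i v = tpow A i w -> (i <= j)%N -> tpow A j v = tpow A j w.
Proof. by move=> e /subnK <-; rewrite !tpowD e. Qed.

Lemma dim_rel_refl x : dim_rel A x x.
Proof. by exists x.2. Qed.

Lemma dim_rel_sym x y : dim_rel A x y -> dim_rel A y x.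
Proof. by case=> L [? ? e]; exists L. Qed.

Lemma dim_rel_trans x y z : dim_rel A x y -> dim_rel A y z -> dim_rel A x z.
Proof.
case=> L1 [h1 h2 e1] [L2 [h3 h4 e2]]; exists (maxn L1 L2); split; try lia.
have up L a k : (k <= L)%N -> (L <= maxn L1 L2)%N ->
    tpow A (maxn L1 L2 - k) a = tpow A (maxn L1 L2 - L) (tpow A (L - k) a).
  by move=> hk hL; rewrite -tpowD; congr tpow; lia.
have [m1 m2] := (leq_maxl L1 L2, leq_maxr L1 L2).
by rewrite (up L1) // e1 -up // (up L2) // e2 -up.
Qed.

Lemma dim_rel_shift v k j : dim_rel A (v, k) (tpow A j v, (k + j)%N).
Proof. by exists (k + j)%N; split => /=; rewrite ?leq_addr // subnn tpow0 addKn. Qed.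

Lemma dim_rel_theta x y : dim_rel A x y -> dim_rel A (dim_theta A x) (dim_theta A y).
Proof. by case=> L [h1 h2 e]; exists L; split => //=; rewrite !tpow_theta e. Qed.

Lemma dim_rel_add x x' y y' :
  dim_rel A x x' -> dim_rel A y y' -> dim_rel A (dim_add A x y) (dim_add A x' y').
Proof.
case=> L1 [h1 h2 e1] [L2 [h3 h4 e2]]; exists (L1 + L2)%N => /=; split; try lia.
have regroup1 a k l : (k <= L1)%N -> (l <= L2)%N ->
    tpow A (L1 + L2 - (k + l)) (tpow A l a) = tpow A L2 (tpow A (L1 - k) a).
  by move=> hk hl; rewrite -!tpowD; congr tpow; lia.
have regroup2 a k l : (k <= L1)%N -> (l <= L2)%N ->
    tpow A (L1 + L2 - (k + l)) (tpow A k a) = tpow A L1 (tpow A (L2 - l) a).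
  by move=> hk hl; rewrite -!tpowD; congr tpow; lia.
by rewrite !tpowDr !regroup1 // !regroup2 // e1 e2.
Qed.

Lemma dim_add0l x : dim_add A (0, 0%N) x = x.
Proof. by case: x => v k; rewrite /dim_add /= tpow0 /tpow mulmx0 add0r. Qed.

Lemma dim_rel_addIr x y z :
  dim_rel A (dim_add A x z) (dim_add A y z) -> dim_rel A x y.
Proof.
case=> L /= [h1 h2 e]; exists L; split; try lia.
move: e; rewrite !tpowDr -!tpowD.
have -> : (L - (x.2 + z.2) + x.2 = L - z.2)%N by lia.
have -> : (L - (y.2 + z.2) + y.2 = L - z.2)%N by lia.
have -> : (L - (x.2 + z.2) + z.2 = L - x.2)%N by lia.
have -> : (L - (y.2 + z.2) + z.2 = L - y.2)%N by lia.
by move/addIr.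
Qed.

Lemma dim_rel_tpowK j x y :
  dim_rel A (tpow A j x.1, x.2) (tpow A j y.1, y.2) -> dim_rel A x y.
Proof.
case=> L /= [h1 h2 e]; exists (L + j)%N; split; try lia.
by rewrite -!addnBAC // !tpowD.
Qed.

Lemma dim_rel_levelD a b i j k :
  dim_rel A (a, (i + k)%N) (b, (j + k)%N) <-> dim_rel A (a, i) (b, j).
Proof.
split=> -[L /= [h1 h2 e]].
  exists (L - k)%N => /=; split; try lia.
  by rewrite -!subnDA (addnC k i) (addnC k j).
by exists (L + k)%N => /=; split; [lia|lia|rewrite !subnDr].
Qed.

Lemma dim_rel_same_level a b k :
  dim_rel A (a, k) (b, k) -> exists N, tpow A N a = tpow A N b.
Proof. by case=> L /= [_ _ e]; exists (L - k)%N. Qed.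

Lemma dim_posP x :
  dim_pos A x <-> exists (u : 'cV[nat]_n) k, dim_rel A x (map_mx Posz u, k).
Proof.
split=> [[y [hxy hy]]|[u [k hx]]].
  exists (map_mx absz y.1), y.2; rewrite -[X in (X, _)](_ : y.1 = _) //.
  by apply/matrixP => i j; rewrite !mxE (ord1 j) gez0_abs.
by exists (map_mx Posz u, k); split => // i; rewrite mxE.
Qed.

Lemma dim_pos_rel x y : dim_rel A x y -> dim_pos A y -> dim_pos A x.
Proof.
by move=> hxy /dim_posP [u [k hy]]; apply/dim_posP; exists u, k; apply: dim_rel_trans hy.
Qed.

Lemma dim_pos_common_level a (x : 'I_a -> drep n) :
  (forall i, dim_pos A (x i)) ->
  exists K (w : 'I_a -> 'cV[nat]_n), forall i, dim_rel A (x i) (map_mx Posz (w i), K).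
Proof.
move=> hx; have /functional_choice [f hf] :
    forall i, exists uk : 'cV[nat]_n * nat, dim_rel A (x i) (map_mx Posz uk.1, uk.2).
  by move=> i; have /dim_posP [u [k h]] := hx i; exists (u, k).
pose K := \max_i (f i).2.
exists K, (fun i => (A ^+ (K - (f i).2))^T *m (f i).1) => i.
apply: dim_rel_trans (hf i) _; rewrite -tpow_map.
have := dim_rel_shift (map_mx Posz (f i).1) (f i).2 (K - (f i).2).
by rewrite subnKC ?leq_bigmax.
Qed.

End DimensionGroup.

Lemma cV_int_ind a (P : 'cV[int]_a -> Prop) :
  P 0 -> (forall v w, P v -> P w -> P (v - w)) -> (forall i, P (delta_mx i 0)) ->
  forall v, P v.
Proof.
move=> P0 PB Pe.
have PN v : P v -> P (- v) by move=> hv; rewrite -sub0r; apply: PB.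
have PD v w : P v -> P w -> P (v + w).
  by move=> hv hw; rewrite -[w]opprK; apply/PB/PN.
have PMn v k : P v -> P (v *+ k).
  by move=> hv; elim: k => [|k IH]; rewrite ?mulr0n ?mulrS; auto.
have PZ v (z : int) : P v -> P (z *: v).
  move=> hv; case: z => k; first by rewrite -natz scaler_nat; apply: PMn.
  by rewrite NegzE scaleNr -natz scaler_nat; apply/PN/PMn.
move=> v; rewrite (matrix_sum_delta v); apply: (big_ind P) => // i _.
by apply: (big_ind P) => // j _; rewrite (ord1 j); apply: PZ.
Qed.

Lemma dim_rel_mx n m (A : 'M[nat]_n) (B : 'M[nat]_m) (R : 'M[nat]_(n, m)) x y :
  A *m R = R *m B -> dim_rel A x y ->
  dim_rel B (tZmx R *m x.1, x.2) (tZmx R *m y.1, y.2).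
Proof. by move=> eAR [L [h1 h2 e]]; exists L; rewrite !(tpow_intertwine eAR) e. Qed.

Lemma eventually_eq_of_dim_rel n m (B : 'M[nat]_m) (P Q : 'M[nat]_(n, m)) k :
  (forall v, dim_rel B (tZmx P *m v, k) (tZmx Q *m v, k)) ->
  exists N, P *m B ^+ N = Q *m B ^+ N.
Proof.
move=> hPQ; have /functional_choice [f hf] : forall i : 'I_n,
    exists N, tpow B N (tZmx P *m delta_mx i 0) = tpow B N (tZmx Q *m delta_mx i 0).
  by move=> i; apply: dim_rel_same_level (hPQ _).
exists (\max_i f i); apply: tZmx_inj; apply/matrixP => j i.
have := tpow_eq_up (hf i) (leq_bigmax i); rewrite !tpow_tZmx -!colE.
by move/matrixP/(_ j 0); rewrite !mxE.
Qed.

Lemma unital_se_rel n m (B : 'M[nat]_m) (R : 'M[nat]_(n, m)) :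
  unital_se B R <-> exists k, dim_rel B (tZmx R *m const_mx 1, k) (dim_unit m).
Proof.
have conv p q :
    B^T ^+ p *m (R^T *m const_mx 1) = B^T ^+ q *m (const_mx 1 : 'cV_m) <->
    tpow B p (tZmx R *m const_mx 1) = tpow B q (const_mx 1).
  have c1 a : (const_mx 1 : 'cV[int]_a) = map_mx Posz (const_mx 1).
    by apply/matrixP => i j; rewrite !mxE.
  rewrite !c1 tZmx_map !tpow_map !trmxX.
  by split => [->|/map_mx_Posz_inj].
split.
  move=> [p [k]] /conv e.
  by exists k, (p + k)%N; split => //=; [exact: leq_addl | rewrite addnK subn0].
move=> [k [L /= [hk _ e]]].
by exists (L - k)%N, k; apply/conv; rewrite subnK // e subn0.
Qed.

Lemma shift_equiv_by_eventual n m (A : 'M[nat]_n) (B : 'M[nat]_m) R S N c :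
  (0 < N)%N ->
  A *m R *m B ^+ N = R *m B *m B ^+ N ->
  B *m S *m A ^+ N = S *m A *m A ^+ N ->
  R *m S *m A ^+ N = A ^+ c *m A ^+ N ->
  S *m R *m B ^+ N = B ^+ c *m B ^+ N ->
  shift_equiv_by A B (N + N + c) (R *m B ^+ N) (S *m A ^+ N).
Proof.
move=> N0 eAR eBS eRS eSR.
have XN (a : nat) (X : 'M[nat]_a) : X ^+ (N + N + c) = X ^+ c *m X ^+ N *m X ^+ N.
  by rewrite !mulmxE -!exprD; congr (_ ^+ _); lia.
have XS (a : nat) (X : 'M[nat]_a) : X *m X ^+ N = X ^+ N *m X.
  by rewrite !mulmxE -exprS -exprSr.
split; first by rewrite !addn_gt0 N0.
- by rewrite -!mulmxA (mulmxA _ S) (mulmx_exp_intertwine eBS) !mulmxA eRS XN.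
- by rewrite -!mulmxA (mulmxA _ R) (mulmx_exp_intertwine eAR) !mulmxA eSR XN.
- by rewrite mulmxA eAR -mulmxA XS mulmxA.
- by rewrite mulmxA eBS -mulmxA XS mulmxA.
Qed.

Lemma shift_equiv_of_eventual n m (A : 'M[nat]_n) (B : 'M[nat]_m) R S c :
  (exists N, A *m R *m B ^+ N = R *m B *m B ^+ N) ->
  (exists N, B *m S *m A ^+ N = S *m A *m A ^+ N) ->
  (exists N, R *m S *m A ^+ N = A ^+ c *m A ^+ N) ->
  (exists N, S *m R *m B ^+ N = B ^+ c *m B ^+ N) ->
  exists l N, shift_equiv_by A B l (R *m B ^+ N) (S *m A ^+ N).
Proof.
move=> [N1 e1] [N2 e2] [N3 e3] [N4 e4]; set N := (N1 + N2 + N3 + N4).+1.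
exists (N + N + c)%N, N; apply: shift_equiv_by_eventual => //;
  [apply: (mulmx_exp_up e1)|apply: (mulmx_exp_up e2)
  |apply: (mulmx_exp_up e3)|apply: (mulmx_exp_up e4)]; rewrite /N; lia.
Qed.

Lemma unital_se_mulmx n m (B : 'M[nat]_m) (R : 'M[nat]_(n, m)) N :
  unital_se B R -> unital_se B (R *m B ^+ N).
Proof.
move=> [p [k e]]; exists p, (k + N)%N.
rewrite trmx_mul trmxX -mulmxA mulmxA mulmxE -exprD addnC exprD -mulmxE -mulmxA e.
by rewrite mulmxA mulmxE -exprD; congr (_ ^+ _ *m _); lia.
Qed.

Section ShiftEquivalenceIso.

Variables (n m l k : nat) (A : 'M[nat]_n) (B : 'M[nat]_m).
Variables (R : 'M[nat]_(n, m)) (S : 'M[nat]_(m, n)).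
Hypothesis hRS : shift_equiv_by A B l R S.
Hypothesis hunit : dim_rel B (tZmx R *m const_mx 1, k) (dim_unit m).

Let eAR : A *m R = R *m B. Proof. by case: hRS. Qed.
Let eBS : B *m S = S *m A. Proof. by case: hRS. Qed.
Let eSR : tZmx S *m tZmx R = tZmx (A ^+ l).
Proof. by case: hRS => _ -> *; rewrite tZmxM. Qed.
Let eRS : tZmx R *m tZmx S = tZmx (B ^+ l).
Proof. by case: hRS => _ _ -> *; rewrite tZmxM. Qed.

Let Th (x : drep n) : drep m := (tZmx R *m x.1, (x.2 + k)%N).

Lemma se_wd x y : dim_rel A x y -> dim_rel B (Th x) (Th y).
Proof. by case: x y => [a i] [b j] /(dim_rel_mx eAR) /= h; apply/dim_rel_levelD. Qed.

Lemma se_inj x y : dim_rel B (Th x) (Th y) -> dim_rel A x y.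
Proof.
case: x y => [a i] [b j] /dim_rel_levelD /(dim_rel_mx eBS) /=.
rewrite !mulmxA eSR -!tpowE; exact: (dim_rel_tpowK (x := (a, i)) (y := (b, j))).
Qed.

Lemma se_add x y : dim_rel B (Th (dim_add A x y)) (dim_add B (Th x) (Th y)).
Proof.
have -> : dim_add B (Th x) (Th y) =
    (tpow B k (Th (dim_add A x y)).1, ((Th (dim_add A x y)).2 + k)%N).
  rewrite /dim_add /= mulmxDr tpowDr -!(tpow_intertwine eAR) -!tpowD.
  by congr pair; [congr (tpow _ _ _ + tpow _ _ _)|]; lia.
exact: dim_rel_shift.
Qed.

Lemma se_surj y : dim_rel B (Th (tZmx S *m tpow B k y.1, (y.2 + l)%N)) y.
Proof.
rewrite /Th /= mulmxA eRS -tpowE -tpowD -addnA; apply: dim_rel_sym.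
by case: y => v j; apply: dim_rel_shift.
Qed.

Lemma se_pos x : dim_pos A x -> dim_pos B (Th x).
Proof.
move=> /dim_posP [u [j hx]]; apply/dim_posP; exists (R^T *m u), (j + k)%N.
by apply: dim_rel_trans (se_wd hx) _; rewrite /Th /= tZmx_map; apply: dim_rel_refl.
Qed.

Lemma se_pos_surj y : dim_pos B y -> exists x, dim_pos A x /\ dim_rel B (Th x) y.
Proof.
move=> /dim_posP [u [j hy]].
exists (tZmx S *m tpow B k (map_mx Posz u), (j + l)%N); split.
  apply/dim_posP; exists (S^T *m ((B ^+ k)^T *m u)), (j + l)%N.
  by rewrite tpow_map tZmx_map; apply: dim_rel_refl.
exact: dim_rel_trans (se_surj (map_mx Posz u, j)) (dim_rel_sym hy).
Qed.

Lemma se_theta x : dim_rel B (Th (dim_theta A x)) (dim_theta B (Th x)).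
Proof. by rewrite /Th /= !tZE mulmxA -tZmxM eAR tZmxM -mulmxA; apply: dim_rel_refl. Qed.

Lemma shift_equiv_dim_iso : dim_data_iso_by A B Th.
Proof.
have unitTh : dim_rel B (Th (dim_unit n)) (dim_unit m) by rewrite /Th /= add0n.
split; first exact: se_wd.
split; first exact: se_add.
split; first exact: se_inj.
split; first by move=> y; eexists; apply: se_surj.
split; first exact: se_pos.
split; first exact: se_pos_surj.
by split; first exact: se_theta.
Qed.

End ShiftEquivalenceIso.

Definition dim_ordhom n m (A : 'M[nat]_n) (B : 'M[nat]_m) (Th : drep n -> drep m) :=
  [/\ forall x y, dim_rel A x y -> dim_rel B (Th x) (Th y),
      forall x y, dim_rel B (Th (dim_add A x y)) (dim_add B (Th x) (Th y)),
      forall x, dim_pos A x -> dim_pos B (Th x) &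
      forall x, dim_rel B (Th (dim_theta A x)) (dim_theta B (Th x))].

Definition induced_by_mx n m (B : 'M[nat]_m) (Th : drep n -> drep m) K
    (R : 'M[nat]_(n, m)) :=
  forall v j, dim_rel B (Th (v, j)) (tZmx R *m v, (K + j)%N).

Section OrderedHomomorphism.

Variables (n m : nat) (A : 'M[nat]_n) (B : 'M[nat]_m) (Th : drep n -> drep m).
Hypothesis hTh : dim_ordhom A B Th.

Lemma ordhom0 : dim_rel B (Th (0, 0%N)) (0, 0%N).
Proof.
case: hTh => _ hadd _ _; have := hadd (0, 0%N) (0, 0%N).
rewrite dim_add0l => /dim_rel_sym h.
by apply: (dim_rel_addIr (z := Th (0, 0%N))); rewrite dim_add0l.
Qed.

Lemma ordhom_on_basis (Rz : 'M[int]_(m, n)) K :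
  (forall i, dim_rel B (Th (delta_mx i 0, 0%N)) (Rz *m delta_mx i 0, K)) ->
  forall v, dim_rel B (Th (v, 0%N)) (Rz *m v, K).
Proof.
case: hTh => _ hadd _ _ he; apply: cV_int_ind => [|v w hv hw|//].
  apply: dim_rel_trans ordhom0 _; have := dim_rel_shift B 0 0 K.
  by rewrite /tpow !mulmx0 add0n.
apply: (dim_rel_addIr (z := Th (w, 0%N))).
apply: dim_rel_trans (dim_rel_sym (hadd _ _)) _.
have -> : dim_add A (v - w, 0%N) (w, 0%N) = (v, 0%N) by rewrite /dim_add /= !tpow0 subrK.
apply: dim_rel_trans hv _.
apply: dim_rel_trans (dim_rel_add (dim_rel_refl _ _) (dim_rel_sym hw)).
by rewrite /dim_add /= -tpowDr -mulmxDr subrK; apply: dim_rel_shift.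
Qed.

Lemma ordhom_tpow j x :
  dim_rel B (Th (tpow A j x.1, x.2)) (tpow B j (Th x).1, (Th x).2).
Proof.
case: hTh => _ _ _ htheta; elim: j => [|j IH].
  by rewrite !tpow0 -!surjective_pairing; apply: dim_rel_refl.
by rewrite !tpowS; apply: dim_rel_trans (htheta (tpow A j x.1, x.2)) (dim_rel_theta IH).
Qed.

Lemma ordhom_induced : exists K R, induced_by_mx B Th K R.
Proof.
case: (hTh) => hwd _ hpos _.
have e_pos i : dim_pos A (delta_mx i 0, 0%N).
  by apply/dim_posP; exists (delta_mx i 0), 0%N; rewrite map_delta_mx; apply: dim_rel_refl.
have [K [w hw]] := dim_pos_common_level (fun i => hpos _ (e_pos i)).
pose R : 'M[nat]_(n, m) := \matrix_(i, j) w i j 0.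
have R_col i : tZmx R *m delta_mx i 0 = map_mx Posz (w i).
  by apply/matrixP => j c; rewrite -colE !mxE (ord1 c).
have hR0 : forall v, dim_rel B (Th (v, 0%N)) (tZmx R *m v, K).
  by apply: ordhom_on_basis => i; rewrite R_col.
exists K, R => v j; apply: (dim_rel_tpowK (j := j)) => /=.
apply: dim_rel_trans (dim_rel_sym (ordhom_tpow j (v, j))) _ => /=.
have := dim_rel_shift A v 0 j; rewrite add0n => /dim_rel_sym /hwd hv.
by apply: dim_rel_trans hv (dim_rel_trans (hR0 v) _); apply: dim_rel_shift.
Qed.

End OrderedHomomorphism.

Lemma dim_iso_ordhom n m (A : 'M[nat]_n) (B : 'M[nat]_m) Th :
  dim_data_iso_by A B Th -> dim_ordhom A B Th.
Proof. by case=> hwd [hadd [_ [_ [hpos [_ [htheta _]]]]]]; split. Qed.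

Lemma dim_iso_inverse n m (A : 'M[nat]_n) (B : 'M[nat]_m) Th :
  dim_data_iso_by A B Th ->
  exists Th' : drep m -> drep n, [/\ dim_ordhom B A Th',
    forall y, dim_rel B (Th (Th' y)) y & forall x, dim_rel A (Th' (Th x)) x].
Proof.
case=> hwd [hadd [hinj [hsurj [hpos [hposr [htheta _]]]]]].
have [Th' hTh'] := functional_choice _ hsurj.
have back y x : dim_rel B y (Th x) -> dim_rel A (Th' y) x.
  by move=> h; apply: hinj; apply: dim_rel_trans (hTh' y) h.
exists Th'; split=> [|//|x]; last by apply: back; apply: dim_rel_refl.
split.
- move=> y y' h; apply: back; exact: dim_rel_trans h (dim_rel_sym (hTh' y')).
- move=> y y'; apply: back; apply: dim_rel_trans (dim_rel_sym (hadd _ _)).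
  exact: dim_rel_add (dim_rel_sym (hTh' y)) (dim_rel_sym (hTh' y')).
- by move=> y /hposr [x [hx hxy]]; apply: dim_pos_rel (back _ _ (dim_rel_sym hxy)) hx.
- move=> y; apply: back; apply: dim_rel_trans (dim_rel_sym (htheta _)).
  exact: dim_rel_theta (dim_rel_sym (hTh' y)).
Qed.

Lemma induced_mx_intertwine n m (A : 'M[nat]_n) (B : 'M[nat]_m) Th K R :
  (forall x, dim_rel B (Th (dim_theta A x)) (dim_theta B (Th x))) ->
  induced_by_mx B Th K R -> exists N, A *m R *m B ^+ N = R *m B *m B ^+ N.
Proof.
move=> htheta hR; apply: (eventually_eq_of_dim_rel (k := K)) => v.
rewrite !tZmxM -(tZE A) -(tZE B) -!mulmxA.
have := hR (tZ A *m v) 0; have := hR v 0; rewrite !addn0 => h1 h2.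
apply: dim_rel_trans (dim_rel_sym h2) _.
exact: dim_rel_trans (htheta (v, 0%N)) (dim_rel_theta h1).
Qed.

Lemma induced_mx_inverse n m (A : 'M[nat]_n) (B : 'M[nat]_m)
    (Th : drep n -> drep m) (Th' : drep m -> drep n) K K' R S :
  (forall x y, dim_rel A x y -> dim_rel B (Th x) (Th y)) ->
  induced_by_mx B Th K R -> induced_by_mx A Th' K' S ->
  (forall y, dim_rel B (Th (Th' y)) y) ->
  exists N, S *m R *m B ^+ N = B ^+ (K + K') *m B ^+ N.
Proof.
move=> hwd hR hS hinv; apply: (eventually_eq_of_dim_rel (k := (K + K')%N)) => w.
rewrite tZmxM -tpowE -mulmxA.
have := hS w 0; rewrite addn0 => /hwd hThS.
apply: dim_rel_trans (dim_rel_sym (hR _ _)) _.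
apply: dim_rel_trans (dim_rel_sym hThS) (dim_rel_trans (hinv _) _).
by have := dim_rel_shift B w 0 (K + K'); rewrite add0n.
Qed.

Lemma unital_se_induced n m (B : 'M[nat]_m) (Th : drep n -> drep m) K R :
  induced_by_mx B Th K R -> dim_rel B (Th (dim_unit n)) (dim_unit m) -> unital_se B R.
Proof.
move=> hR hu; apply/unital_se_rel; exists K.
by have := hR (const_mx 1) 0; rewrite addn0 => /dim_rel_sym /dim_rel_trans; apply.
Qed.

Theorem proposition3p2 (n m : nat) (A : 'M[nat]_n) (B : 'M[nat]_m) :
  unitally_shift_equivalent A B <-> dim_data_isomorphic A B.
Proof.
split=> [[l [R [S [hRS /unital_se_rel [k hk]]]]]|[Th hiso]].
  by eexists; apply: (shift_equiv_dim_iso hRS hk).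
have [Th' [hTh' inv_B inv_A]] := dim_iso_inverse hiso.
have hTh := dim_iso_ordhom hiso.
have [[K [R hR]] [K' [S hS]]] := (ordhom_induced hTh, ordhom_induced hTh').
case: hTh hTh' => [wd _ _ th] [wd' _ _ th'].
have eRS := induced_mx_inverse wd' hS hR inv_A; rewrite addnC in eRS.
have [l [N hse]] := shift_equiv_of_eventual (induced_mx_intertwine th hR)
  (induced_mx_intertwine th' hS) eRS (induced_mx_inverse wd hR hS inv_B).
exists l, (R *m B ^+ N), (S *m A ^+ N); split=> //.
by apply/unital_se_mulmx/(unital_se_induced hR); case: hiso => [_ [_ [_ [_ [_ [_ []]]]]]].
Qed.
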